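(* Let $G$ be a graph, $W$ a $(w\times w)$-wall in $G$, and $C$ a cycle in $G$ such that for some choice of pegs of $W$ every peg lies in $V(C)$. Let $G_0,G_1,\dots,G_k$ and a plane graph $\tilde G$ witness that $G$ is $C$-flat. Then $\tilde G$ contains a $(w-2)\times(w-2)$ grid as a minor.
   Context: Elementary wall of height $h$, width $r$: from the $h\times2r$ grid with vertices $v_{i,j}$, in column $j$ with vertical edges $e^j_1,\dots,e^j_{h-1}$ ordered from $v_{1,j}$, delete $e^j_i$ for even $i$ when $j$ is odd and for odd $i$ when $j$ is even, then delete degree-1 vertices. Pegs are the degree-2 vertices of its outer boundary cycle (first row, last row, and the leftmost and rightmost vertical paths). A $(w\times w)$-wall is a subdivision of the elementary wall with $h=r=w$; its pegs are images of the pegs. $G$ is $C$-flat, witnessed by subgraphs $G_0,\dots,G_k$ and a plane graph $\tilde G$, if: $G=G_0\cup\dots\cup G_k$, pairwise edge-disjoint; $C\subseteq G_0$; $G_0\subseteq\tilde G$, $V(\tilde G)=V(G_0)$, and $C$ bounds the outer face of $\tilde G$; for $i\in[k]$, $|V(G_i)\cap V(G_0)|\le3$, if it equals $\{u,v\}$ then $uv\in E(\tilde G)$, if it equals $\{u,v,w\}$ then some finite face of $\tilde G$ is bounded exactly by $uv,vw,uw$; and $V(G_i)\cap V(G_j)\subseteq V(G_0)$ for distinct $i,j\in[k]$. *)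

From HB Require Import structures.
From mathcomp Require Import all_boot all_order all_algebra.
From mathcomp Require Import all_classical all_reals all_analysis.
Set Implicit Arguments. Unset Strict Implicit. Unset Printing Implicit Defensive.
Import Order.TTheory GRing.Theory Num.Theory.
Import numFieldNormedType.Exports.

Record sgraph (V : finType) := SGraph { gV : {set V}; gE : {set {set V}} }.

Section Graphs.
Variable V : finType.
Implicit Types G H C : sgraph V.

Definition wf_graph G := forall e, e \in gE G -> (#|e| == 2) && (e \subset gV G).
Definition adj G (u v : V) : bool := [set u; v] \in gE G.
Definition subgraph H G := (gV H \subset gV G) /\ (gE H \subset gE G).

Definition is_cycle C := exists s : seq V,
  [/\ 3 <= size s, uniq s, gV C = [set x in s]
    & gE C = [set [set x; next s x] | x in s]].

Definition connected_in H (S : {set V}) := forall a b, a \in S -> b \in S ->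
  exists p : seq V, path [rel x y | (y \in S) && adj H x y] a p && (last a p == b).

Definition grid_adj n (x y : 'I_n * 'I_n) : bool :=
  ((x.1 == y.1) && ((x.2.+1 == y.2) || (y.2.+1 == x.2))) ||
  ((x.2 == y.2) && ((x.1.+1 == y.1) || (y.1.+1 == x.1))).

Definition has_grid_minor H (n : nat) := exists B : 'I_n * 'I_n -> {set V},
  [/\ forall x, B x != finset.set0,
      forall x, B x \subset gV H,
      forall x, connected_in H (B x),
      forall x y, x != y -> [disjoint B x & B y]
    & forall x y, grid_adj x y -> exists a b, [/\ a \in B x, b \in B y & adj H a b]].
End Graphs.

(* ---------- the elementary wall (0-indexed: v_{i+1,j+1} is (i,j)) ---------- *)
Section Wall.
Variables h r : nat.
Definition wvert := ('I_h * 'I_(r.*2))%type.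

(* the h x 2r grid with the vertical edges e^j_i removed when i + j is odd
   (1-indexed), i.e. for even i when j is odd and for odd i when j is even *)
Definition wall0_adj (x y : wvert) : bool :=
  ((x.1 == y.1 :> nat) && ((x.2.+1 == y.2) || (y.2.+1 == x.2))) ||
  ((x.2 == y.2 :> nat) && (((x.1.+1 == y.1) || (y.1.+1 == x.1))
                           && ~~ odd (minn x.1 y.1 + x.2))).
(* then delete the vertices of degree 1 *)
Definition in_wall (x : wvert) : bool := #|[set y | wall0_adj x y]| != 1.
Definition wall_adj (x y : wvert) : bool := [&& wall0_adj x y, in_wall x & in_wall y].
Definition wall_deg (x : wvert) : nat := #|[set y | wall_adj x y]|.
Definition wall_border (x : wvert) : bool :=
  [|| x.1 == 0 :> nat, x.1 == h.-1 :> nat, x.2 == 0 :> nat | x.2 == (r.*2).-1 :> nat].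
Definition wall_peg (x : wvert) : bool := [&& in_wall x, wall_border x & wall_deg x == 2].

(* a subdivision of the elementary wall in G: branch vertices phi, and for each
   wall edge xy a path phi x - P x y - phi y in G (P x y = internal vertices),
   internally disjoint, internal vertices avoiding branch vertices *)
Definition wall_model (V : finType) (G : sgraph V) (phi : wvert -> V)
    (P : wvert -> wvert -> seq V) : Prop :=
  [/\ forall x y, in_wall x -> in_wall y -> phi x = phi y -> x = y,
      forall x, in_wall x -> phi x \in gV G,
      forall x y, wall_adj x y ->
        [/\ path (adj G) (phi x) (rcons (P x y) (phi y)),
            uniq (phi x :: rcons (P x y) (phi y)) & P y x = rev (P x y)],
      forall x y x' y', wall_adj x y -> wall_adj x' y' -> [set x; y] != [set x'; y'] ->
        ~~ has (mem (P x' y')) (P x y)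
    & forall x y z, wall_adj x y -> in_wall z -> phi z \notin P x y].
End Wall.

Section Plane.
Local Open Scope ring_scope.
Variables (V : finType) (R : realType).
Variables (pos : V -> (R * R)%type) (arc : {set V} -> R -> (R * R)%type).

Definition unit_itv (t : R) := (0 <= t) && (t <= 1).

Definition plane_embedding (H : sgraph V) : Prop :=
  [/\ forall x y, x \in gV H -> y \in gV H -> pos x = pos y -> x = y,
      forall e, e \in gE H ->
        [/\ exists u v, e = [set u; v] /\ arc e 0 = pos u /\ arc e 1 = pos v,
            ({within `[0%R, 1%R], continuous (arc e)})%classic,
            forall s t, unit_itv s -> unit_itv t -> arc e s = arc e t -> s = t
          & forall t x, 0 < t < 1 -> x \in gV H -> arc e t <> pos x]
    & forall e e' s t, e \in gE H -> e' \in gE H -> e != e' ->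
        unit_itv s -> unit_itv t -> arc e s = arc e' t -> s = 0 \/ s = 1].

Definition drawing (Vs : {set V}) (Es : {set {set V}}) : set (R * R) :=
  fun p => (exists x, x \in Vs /\ p = pos x) \/
           (exists e, e \in Es /\ exists t, unit_itv t /\ p = arc e t).

Definition face (H : sgraph V) (F : set (R * R)) : Prop :=
  exists p, ~ drawing (gV H) (gE H) p /\ F = connected_component (~` drawing (gV H) (gE H))%classic p.

Definition bounded_set2 (F : set (R * R)) : Prop :=
  exists M : R, forall p, F p -> `|p.1| <= M /\ `|p.2| <= M.

Definition boundary (F : set (R * R)) : set (R * R) := (closure F `\` interior F)%classic.
End Plane.

Definition C_flat_witness (V : finType) (R : realType) (G C : sgraph V) (k : nat)
    (Gs : nat -> sgraph V) (Gt : sgraph V)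
    (pos : V -> (R * R)%type) (arc : {set V} -> R -> (R * R)%type) : Prop :=
  [/\
      wf_graph Gt /\ plane_embedding pos arc Gt,
      (forall i, i <= k -> wf_graph (Gs i)) /\
      gV G = \bigcup_(i < k.+1) gV (Gs i) /\ gE G = \bigcup_(i < k.+1) gE (Gs i) /\
      (forall i j, i <= k -> j <= k -> i != j -> [disjoint gE (Gs i) & gE (Gs j)]),
      subgraph C (Gs 0) /\ subgraph (Gs 0) Gt /\ gV Gt = gV (Gs 0) /\
      (forall F, face pos arc Gt F -> ~ bounded_set2 F ->
         boundary F = drawing pos arc (gV C) (gE C)),
      (forall i, 0 < i <= k ->
        let A := gV (Gs i) :&: gV (Gs 0) in
        [/\ #|A| <= 3,
            forall u v, u != v -> A = [set u; v] -> adj Gt u v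
          & forall u v w, u != v -> v != w -> u != w -> A = [set u; v; w] ->
              exists F, [/\ face pos arc Gt F, bounded_set2 F,
                [&& adj Gt u v, adj Gt v w & adj Gt u w] &
                boundary F = drawing pos arc finset.set0 [set [set u; v]; [set v; w]; [set u; w]]]])
    &
      (forall i j, 0 < i <= k -> 0 < j <= k -> i != j ->
         gV (Gs i) :&: gV (Gs j) \subset gV (Gs 0))].

From HB Require Import structures.
From mathcomp Require Import all_boot all_order all_algebra.
From mathcomp Require Import all_classical all_reals all_analysis.
From mathcomp Require Import zify.
From mathcomp Require Import ssrbool eqtype ssrnat seq path fintype finset.
Set Implicit Arguments. Unset Strict Implicit. Unset Printing Implicit Defensive.
Local Open Scope nat_scope.

(* For the grid vertex (a, b) take as branch set the image in G of the two middle
   vertices of row a+1 in brick column b together with three incident wall edges; these sets are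
   connected, pairwise disjoint and adjacent along the grid, and their traces on V(G_0) are the
   branch sets of the minor in Gt.  Connectivity and adjacency survive the restriction to V(G_0)
   because a detour through some G_i (i > 0) enters and leaves G_0 at attachment vertices of G_i,
   which are pairwise adjacent in Gt.  Each branch set meets G_0: otherwise it would lie inside a
   single G_i, yet four disjoint wall paths lead from it to pegs, which lie on C and hence in G_0,
   so G_i would need four distinct attachment vertices. *)

Section Connectivity.
Variable V : finType.
Implicit Types (H : sgraph V) (S : {set V}).

Lemma adjC H u v : adj H u v = adj H v u.
Proof. by rewrite /adj setUC. Qed.

Lemma wf_adj H u v : wf_graph H -> adj H u v -> [/\ u \in gV H, v \in gV H & u != v].
Proof.
move=> wfH /wfH /andP[card_uv sub_uv]; rewrite cards2 in card_uv.
by rewrite !(subsetP sub_uv) ?inE ?eqxx ?orbT //; case: (u != v) card_uv.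
Qed.

Lemma path_adj_inG H u p v : wf_graph H -> path (adj H) u p -> v \in p -> v \in gV H.
Proof.
move=> wfH; elim: p u => [|y p IHp] u //= /andP[uy yp].
by rewrite inE => /predU1P[->|/(IHp _ yp)//]; case: (wf_adj wfH uy).
Qed.

Definition adj_within H S := [rel x y | (y \in S) && adj H x y].

Lemma path_adj_within H S u p :
  path (adj_within H S) u p = path (adj H) u p && all (mem S) p.
Proof.
elim: p u => [|y p IHp] u //=; rewrite IHp /=.
by case: (y \in S); case: (adj H u y); rewrite ?andbF.
Qed.

Definition reachable_in H S u v := exists p, path (adj_within H S) u p && (last u p == v).

Lemma reachable_in_refl H S u : reachable_in H S u u.
Proof. by exists [::]; rewrite /= eqxx. Qed.

Lemma reachable_in_trans H S u v x :
  reachable_in H S u v -> reachable_in H S v x -> reachable_in H S u x.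
Proof.
move=> [p /andP[pp /eqP <-]] [q /andP[qq lq]].
by exists (p ++ q); rewrite cat_path last_cat pp qq lq.
Qed.

Lemma reachable_in_sym H S u v : u \in S -> reachable_in H S u v -> reachable_in H S v u.
Proof.
move=> uS [p /andP[+ /eqP <-]]; rewrite path_adj_within => /andP[pp pS].
exists (rev (belast u p)); rewrite path_adj_within rev_path all_rev -andbA; apply/and3P; split.
- by rewrite (eq_path (e' := adj H)) // => x y /=; rewrite adjC.
- by apply/allP => x /mem_belast /predU1P[-> //|]; apply/allP.
- by case: p {pp pS} => [|y p] //=; rewrite rev_cons last_rcons.
Qed.

Lemma reachable_in_path H S u p v :
  path (adj H) u p -> {subset p <= S} -> v \in p -> reachable_in H S u v.
Proof.
move=> pp pS vp; have vi : index v p < size p by rewrite index_mem.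
have prefS : all (mem S) (take (index v p).+1 p) by apply/allP => x /mem_take /pS.
exists (take (index v p).+1 p); rewrite path_adj_within (take_path _ pp) prefS /=.
by rewrite (take_nth v vi) last_rcons nth_index.
Qed.

Lemma connected_in_of_root H S x : x \in S ->
  (forall v, v \in S -> reachable_in H S x v) -> connected_in H S.
Proof.
move=> xS reach_x a b aS bS.
exact: reachable_in_trans (reachable_in_sym xS (reach_x a aS)) (reach_x b bS).
Qed.

End Connectivity.

(* All that the argument needs from C-flatness: the drawing of Gt matters only in that each G_i
   (i > 0) meets G_0 in at most three vertices, and these span a clique of Gt. *)
Record flat_decomposition (V : finType) (G Gt : sgraph V) (k : nat) (Gs : nat -> sgraph V) :
    Prop := {
  flat_wf : forall j, j <= k -> wf_graph (Gs j);
  flat_coverV : forall v, v \in gV G -> exists2 j, j <= k & v \in gV (Gs j);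
  flat_coverE : forall e, e \in gE G -> exists2 j, j <= k & e \in gE (Gs j);
  flat_overlap : forall i j, 0 < i <= k -> 0 < j <= k -> i != j ->
    gV (Gs i) :&: gV (Gs j) \subset gV (Gs 0);
  flat_E0 : gE (Gs 0) \subset gE Gt;
  flat_attach_card : forall i, 0 < i <= k -> #|gV (Gs i) :&: gV (Gs 0)| <= 3;
  flat_attach_adj : forall i, 0 < i <= k -> forall u v,
    u \in gV (Gs i) :&: gV (Gs 0) -> v \in gV (Gs i) :&: gV (Gs 0) -> u != v -> adj Gt u v }.

Lemma C_flat_witness_flat (V : finType) (R : realType) (G C : sgraph V) k Gs Gt
    (pos : V -> (R * R)%type) (arc : {set V} -> R -> (R * R)%type) :
  C_flat_witness G C k Gs Gt pos arc -> flat_decomposition G Gt k Gs.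
Proof.
case=> _ [wfGs [VG [EG _]]] [_ [[_ E0t] _]] attach overlap.
have bigcup_le (T : finType) (F : nat -> {set T}) x :
    x \in \bigcup_(i < k.+1) F i -> exists2 j, j <= k & x \in F j.
  by case/bigcupP => i _ xi; exists i; first exact: ltn_ord i.
split=> // [v|e|i /attach[]//|i /attach[card_A adj2 adj3] u v uA vA uv].
- by rewrite VG => /(bigcup_le _ (fun j => gV (Gs j))).
- by rewrite EG => /(bigcup_le _ (fun j => gE (Gs j))).
set A := gV (Gs i) :&: gV (Gs 0) in card_A adj2 adj3 uA vA.
have uvA : [set u; v] \subset A by rewrite subUset !sub1set uA vA.
have [cardA2|cardA3] := leqP #|A| 2.
  by apply: adj2 => //; apply/eqP; rewrite eq_sym eqEcard uvA cards2 uv.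
have [x xA] : exists2 x, x \in A & x \notin [set u; v].
  apply/subsetPn; apply: contraTN cardA3 => /subset_leq_card.
  by rewrite cards2 uv -leqNgt.
rewrite !inE negb_or => /andP[xu xv].
have eqA : A = [set u; v; x].
  apply/eqP; rewrite eq_sym eqEcard subUset uvA sub1set xA /=.
  by rewrite setUC cardsU1 cards2 !inE negb_or xu xv uv.
have vx : v != x by rewrite eq_sym.
have ux : u != x by rewrite eq_sym.
by have [F [_ _ /and3P[]]] := adj3 u v x uv vx ux eqA.
Qed.

Section FlatDecomposition.
Variables (V : finType) (G Gt : sgraph V) (k : nat) (Gs : nat -> sgraph V).
Hypotheses (flatG : flat_decomposition G Gt k Gs) (wfG : wf_graph G).
Local Notation V0 := (gV (Gs 0)).

Lemma flat_piece_of_vertex u : u \in gV G -> u \notin V0 ->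
  exists2 i, 0 < i <= k & u \in gV (Gs i).
Proof. by move=> /(flat_coverV flatG)[[|i] ik ui u0]; [rewrite ui in u0 | exists i.+1]. Qed.

Lemma flat_piece_nbr i u y : 0 < i <= k -> u \in gV (Gs i) -> u \notin V0 ->
  adj G u y -> y \in gV (Gs i).
Proof.
move=> ik ui u0 /(flat_coverE flatG)[j jk uyj].
have /andP[_ /subsetP sub_j] := flat_wf flatG jk uyj.
have [uj yj] : u \in gV (Gs j) /\ y \in gV (Gs j) by rewrite !sub_j ?inE ?eqxx ?orbT.
have [-> // | ij] := eqVneq i j.
case: j jk uyj uj yj ij sub_j => [|j] jk _ uj yj ij _; first by rewrite uj in u0.
have /subsetP /(_ u) := flat_overlap flatG ik (j := j.+1) jk ij.
by rewrite inE ui uj (negbTE u0) => /(_ isT).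
Qed.

Lemma flat_adj_V0 u y : u \in V0 -> y \in V0 -> adj G u y -> adj Gt u y.
Proof.
move=> u0 y0 uy; have [_ _ neq_uy] := wf_adj wfG uy.
have [[|j] jk uyj] := flat_coverE flatG uy; first exact: subsetP (flat_E0 flatG) _ uyj.
have /andP[_ /subsetP sub_j] := flat_wf flatG jk uyj.
by apply: (flat_attach_adj flatG (i := j.+1)); rewrite // inE ?sub_j ?inE ?eqxx ?orbT.
Qed.

Lemma flat_path_in_piece i u p : 0 < i <= k -> u \in gV (Gs i) -> u \notin V0 ->
  path (adj G) u p -> all [pred x | x \notin V0] p -> last u p \in gV (Gs i).
Proof.
move=> ik; elim: p u => [|y p IHp] u //= ui u0 /andP[uy yp] /andP[y0 p0].
exact: IHp (flat_piece_nbr ik ui u0 uy) y0 yp p0.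
Qed.

Lemma flat_path_exit i u p : 0 < i <= k -> u \in gV (Gs i) -> u \notin V0 ->
  path (adj G) u p -> last u p \in V0 ->
  exists p1 z p2, [/\ p = p1 ++ z :: p2, z \in V0 & z \in gV (Gs i)].
Proof.
move=> ik; elim: p u => [|y p IHp] u ui u0 /=; first by rewrite (negbTE u0).
move=> /andP[uy yp] lp; have yi := flat_piece_nbr ik ui u0 uy.
have [y0|y0] := boolP (y \in V0); first by exists [::], y, p.
by have [p1 [z [p2 [-> z0 zi]]]] := IHp y yi y0 yp lp; exists (y :: p1), z, p2.
Qed.

(* Every stretch of the path outside G_0 lies in one G_i and is short-cut by an edge of Gt
   between two attachments of G_i. *)
Lemma flat_reachable_V0 (S : {set V}) a p : a \in V0 -> path (adj_within G S) a p ->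
  last a p \in V0 -> reachable_in Gt (S :&: V0) a (last a p).
Proof.
elim: {p}_.+1 {-2}p (ltnSn (size p)) a => // n IHn [|y p] size_p a.
  by move=> *; apply: reachable_in_refl.
rewrite ltnS in size_p; move=> a0 /= /andP[/andP[yS ay] yp] lp.
have [y0|y0] := boolP (y \in V0).
  apply: (reachable_in_trans _ (IHn _ size_p _ y0 yp lp)).
  by exists [:: y]; rewrite /= inE yS y0 (flat_adj_V0 a0 y0 ay) eqxx.
have [_ yG _] := wf_adj wfG ay.
have [i ik yi] := flat_piece_of_vertex yG y0.
have ai : a \in gV (Gs i) by apply: flat_piece_nbr ik yi y0 _; rewrite adjC.
have yp' : path (adj G) y p by move: yp; rewrite path_adj_within => /andP[].
have [p1 [z [p2 [def_p z0 zi]]]] := flat_path_exit ik yi y0 yp' lp.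
have [zS zp2] : z \in S /\ path (adj_within G S) z p2.
  by move: yp; rewrite def_p cat_path /= => /and3P[_ /andP[zS _] zp2].
rewrite def_p last_cat /= in lp *.
apply: (reachable_in_trans _ (IHn _ _ _ z0 zp2 lp));
  last by move: size_p; rewrite def_p /= size_cat /=; clear; lia.
have [<-|az] := eqVneq a z; first exact: reachable_in_refl.
by exists [:: z]; rewrite /= inE zS z0 (flat_attach_adj flatG ik) ?inE ?a0 ?ai ?z0 ?zi ?eqxx.
Qed.

Lemma flat_connected_in (X : {set V}) : connected_in G X -> connected_in Gt (X :&: V0).
Proof.
move=> connX a b; rewrite !inE => /andP[aX a0] /andP[bX b0].
have [p /andP[pX /eqP lp]] := connX a b aX bX.
by rewrite -lp; apply: flat_reachable_V0; rewrite ?lp.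
Qed.

Lemma flat_piece_meets_V0 (X : {set V}) i x : connected_in G X -> 0 < i <= k ->
  x \in X -> x \notin V0 -> x \in gV (Gs i) -> X :&: V0 != set0 ->
  exists2 a, a \in X :&: V0 & a \in gV (Gs i).
Proof.
move=> connX ik xX x0 xi /set0Pn[b]; rewrite inE => /andP[bX b0].
have [p /andP[+ /eqP lp]] := connX x b xX bX; rewrite path_adj_within => /andP[xp pX].
rewrite -lp in b0; have [p1 [z [p2 [def_p z0 zi]]]] := flat_path_exit ik xi x0 xp b0.
exists z => //; rewrite inE z0 andbT.
by move/allP: pX; apply; rewrite def_p mem_cat mem_head orbT.
Qed.

Lemma flat_adj_transfer_piece (X Y : {set V}) x y :
  [disjoint X & Y] -> connected_in G X -> connected_in G Y ->
  X :&: V0 != set0 -> Y :&: V0 != set0 ->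
  x \in X -> y \in Y -> adj G x y -> x \notin V0 ->
  exists a b, [/\ a \in X :&: V0, b \in Y :&: V0 & adj Gt a b].
Proof.
move=> dXY connX connY X0 Y0 xX yY xy x0.
have [xG _ _] := wf_adj wfG xy.
have [i ik xi] := flat_piece_of_vertex xG x0.
have [a aX ai] := flat_piece_meets_V0 connX ik xX x0 xi X0.
have [b bY bi] : exists2 b, b \in Y :&: V0 & b \in gV (Gs i).
  have yi := flat_piece_nbr ik xi x0 xy.
  have [y0|y0] := boolP (y \in V0); first by exists y; rewrite // inE yY y0.
  exact: flat_piece_meets_V0 connY ik yY y0 yi Y0.
exists a, b; split => //; move: aX bY; rewrite !inE => /andP[aX a0] /andP[bY b0].
apply: (flat_attach_adj flatG ik); rewrite ?inE ?ai ?a0 ?bi ?b0 //.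
by apply: contraTneq aX => ->; rewrite (disjointFl dXY bY).
Qed.

(* An edge leaving G_0 lies in some G_i, whose attachments form a clique of Gt. *)
Lemma flat_adj_transfer (X Y : {set V}) x y :
  [disjoint X & Y] -> connected_in G X -> connected_in G Y ->
  X :&: V0 != set0 -> Y :&: V0 != set0 ->
  x \in X -> y \in Y -> adj G x y ->
  exists a b, [/\ a \in X :&: V0, b \in Y :&: V0 & adj Gt a b].
Proof.
move=> dXY connX connY X0 Y0 xX yY xy.
have [x0|x0] := boolP (x \in V0); last exact: flat_adj_transfer_piece xy x0.
have [y0|y0] := boolP (y \in V0).
  by exists x, y; rewrite !inE xX yY x0 y0 flat_adj_V0.
rewrite disjoint_sym in dXY; rewrite adjC in xy.
have [b [a [bY aX ab]]] := flat_adj_transfer_piece dXY connY connX Y0 X0 yY xX xy y0.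
by exists a, b; rewrite adjC.
Qed.

(* A connected set missing G_0 lies inside one G_i, so all its exits to G_0 pass through the at
   most three attachment vertices of G_i. *)
Lemma flat_meets_V0_of_exits (X : {set V}) (s : 'I_4 -> V) (p : 'I_4 -> seq V) :
  connected_in G X -> X \subset gV G ->
  (forall j, s j \in X) -> (forall j, path (adj G) (s j) (p j)) ->
  (forall j, last (s j) (p j) \in V0) ->
  (forall j j', j != j' -> [disjoint p j & p j']) ->
  X :&: V0 != set0.
Proof.
move=> connX XG sX sp sV0 disj_p; apply/negP => /eqP X0.
have nX v : v \in X -> v \notin V0.
  by move=> vX; apply/negP => v0; have := in_set0 v; rewrite -X0 inE vX v0.
have [i ik s0i] := flat_piece_of_vertex (subsetP XG _ (sX ord0)) (nX _ (sX ord0)).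
have Xi v : v \in X -> v \in gV (Gs i).
  move=> vX; have [q /andP[+ /eqP <-]] := connX _ _ (sX ord0) vX.
  rewrite path_adj_within => /andP[sq qX]; apply: flat_path_in_piece => //; first exact: nX.
  by apply/allP => u /(allP qX) /nX.
have exit j : exists2 z, z \in p j & z \in gV (Gs i) :&: V0.
  have [p1 [z [p2 [def_p z0 zi]]]] := flat_path_exit ik (Xi _ (sX j)) (nX _ (sX j)) (sp j) (sV0 j).
  by exists z; rewrite ?def_p ?mem_cat ?mem_head ?orbT // inE zi z0.
pose z j := odflt (s j) [pick v in gV (Gs i) :&: V0 | v \in p j].
have zP j : (z j \in p j) && (z j \in gV (Gs i) :&: V0).
  rewrite /z; case: pickP => [v /andP[vA vp] | none] /=; first by rewrite vp vA.
  by have [v vp vA] := exit j; have := none v; rewrite vA vp.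
have z_inj : injective z.
  move=> j j' ezz; apply/eqP/negPn/negP => /disj_p disj_jj'.
  case/andP: (zP j) => zj _; case/andP: (zP j') => zj' _.
  by rewrite -ezz (disjointFr disj_jj' zj) in zj'.
have : #|[set z j | j : 'I_4]| <= 3.
  apply: leq_trans (flat_attach_card flatG ik); apply/subset_leq_card/subsetP.
  by move=> _ /imsetP[j _ ->]; case/andP: (zP j).
by rewrite card_imset // card_ord.
Qed.

End FlatDecomposition.

Section WallCoordinates.
Variables (h r : nat) (x0 : wvert h r).

Definition wall0_nat (i j i' j' : nat) : bool :=
  ((i == i') && ((j.+1 == j') || (j'.+1 == j))) ||
  ((j == j') && (((i.+1 == i') || (i'.+1 == i)) && ~~ odd (minn i i' + j))).

(* The vertex in row i and column j (0-indexed); x0 supplies a junk value out of range. *)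
Definition wv (i j : nat) : wvert h r := (insubd x0.1 i, insubd x0.2 j).

Lemma wv_fst i j : i < h -> (wv i j).1 = i :> nat.
Proof. by move=> ih; rewrite /= val_insubd ih. Qed.

Lemma wv_snd i j : j < r.*2 -> (wv i j).2 = j :> nat.
Proof. by move=> jr; rewrite /= val_insubd jr. Qed.

Lemma wv_eta (y : wvert h r) : y = wv y.1 y.2.
Proof. by case: y => a b; congr pair; apply: val_inj; rewrite val_insubd ltn_ord. Qed.

Lemma wv_inj i j i' j' : i < h -> j < r.*2 -> i' < h -> j' < r.*2 ->
  wv i j = wv i' j' -> i = i' /\ j = j'.
Proof.
move=> ih jr i'h j'r e; split.
  by rewrite -(wv_fst j ih) -(wv_fst j' i'h) e.
by rewrite -(wv_snd i jr) -(wv_snd i' j'r) e.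
Qed.

Lemma eq_wv i j i' j' : i < h -> j < r.*2 -> i' < h -> j' < r.*2 ->
  (wv i j == wv i' j') = (i == i') && (j == j').
Proof. by move=> *; apply/eqP/andP => [/wv_inj[]// -> ->|[/eqP-> /eqP->]]. Qed.

Lemma wall0_adj_wv i j i' j' : i < h -> j < r.*2 -> i' < h -> j' < r.*2 ->
  wall0_adj (wv i j) (wv i' j') = wall0_nat i j i' j'.
Proof. by move=> *; rewrite /wall0_adj !wv_fst ?wv_snd. Qed.

Lemma in_wall_wv_of_nbrs i j i1 j1 i2 j2 :
  i < h -> j < r.*2 -> i1 < h -> j1 < r.*2 -> i2 < h -> j2 < r.*2 ->
  wall0_nat i j i1 j1 -> wall0_nat i j i2 j2 -> (i1 != i2) || (j1 != j2) ->
  in_wall (wv i j).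
Proof.
move=> ih jr i1h j1r i2h j2r adj1 adj2 neq12.
have neq : wv i1 j1 != wv i2 j2 by apply/eqP => /wv_inj; move: neq12; lia.
have sub : [set wv i1 j1; wv i2 j2] \subset [set y | wall0_adj (wv i j) y].
  by rewrite subUset !sub1set !inE !wall0_adj_wv ?adj1 ?adj2.
by move: (subset_leq_card sub); rewrite /in_wall cards2 neq; case: #|_| => [|[]].
Qed.

Lemma in_wall_interior i j : i < h -> j < r.*2 ->
  (0 < j) && (j.+1 < r.*2) || (0 < i) && (i.+1 < h) -> in_wall (wv i j).
Proof.
move=> ih jr /orP[inner|inner].
  by apply: (@in_wall_wv_of_nbrs i j i j.-1 i j.+1); rewrite /wall0_nat; lia.
have [j0|j0] := posnP j; have [odd_ij|even_ij] := boolP (odd (i + j)).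
- by apply: (@in_wall_wv_of_nbrs i j i j.+1 i.-1 j); rewrite /wall0_nat; lia.
- by apply: (@in_wall_wv_of_nbrs i j i j.+1 i.+1 j); rewrite /wall0_nat; lia.
- by apply: (@in_wall_wv_of_nbrs i j i j.-1 i.-1 j); rewrite /wall0_nat; lia.
- by apply: (@in_wall_wv_of_nbrs i j i j.-1 i.+1 j); rewrite /wall0_nat; lia.
Qed.

Lemma wall_adj_wv i j i' j' : i < h -> j < r.*2 -> i' < h -> j' < r.*2 ->
  wall0_nat i j i' j' -> in_wall (wv i j) -> in_wall (wv i' j') ->
  wall_adj (wv i j) (wv i' j').
Proof. by move=> *; rewrite /wall_adj wall0_adj_wv //; apply/and3P. Qed.

Lemma wall_deg_wv i j i1 j1 i2 j2 :
  i < h -> j < r.*2 -> i1 < h -> j1 < r.*2 -> i2 < h -> j2 < r.*2 ->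
  in_wall (wv i j) -> in_wall (wv i1 j1) -> in_wall (wv i2 j2) ->
  wall0_nat i j i1 j1 -> wall0_nat i j i2 j2 -> (i1 != i2) || (j1 != j2) ->
  (forall i' j', i' < h -> j' < r.*2 -> wall0_nat i j i' j' ->
     i' = i1 /\ j' = j1 \/ i' = i2 /\ j' = j2) ->
  wall_deg (wv i j) = 2.
Proof.
move=> ih jr i1h j1r i2h j2r wij w1 w2 adj1 adj2 neq12 only12; rewrite /wall_deg.
have -> : [set y | wall_adj (wv i j) y] = [set wv i1 j1; wv i2 j2].
  apply/setP => y; rewrite [y]wv_eta !inE /wall_adj wij wall0_adj_wv ?ltn_ord //=.
  apply/idP/idP.
    by case/andP => /only12 -/(_ (ltn_ord _) (ltn_ord _)) [[-> ->]|[-> ->]]; rewrite eqxx ?orbT.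
  case/orP => /eqP /wv_inj -/(_ (ltn_ord _) (ltn_ord _)) [] // -> ->.
    by rewrite adj1 w1.
  by rewrite adj2 w2.
rewrite cards2; case: eqP => // /wv_inj; move: neq12; lia.
Qed.

Lemma wall_peg_wv i j : i < h -> j < r.*2 -> in_wall (wv i j) ->
  [|| i == 0, i == h.-1, j == 0 | j == (r.*2).-1] ->
  wall_deg (wv i j) = 2 -> wall_peg (wv i j).
Proof.
move=> ih jr wij border deg2.
by rewrite /wall_peg /wall_border wij deg2 eqxx andbT wv_fst // wv_snd.
Qed.

End WallCoordinates.

Local Ltac wall_lia := unfold wall0_nat in *; lia.

(* Of the two middle columns 2b+2, 2b+3 of brick column b, [down_col b i] carries the vertical
   edge between rows i and i+1, and [up_col b i] the one between rows i and i-1. *)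
Definition down_col (b i : nat) := if odd i then b.*2.+3 else b.*2.+2.
Definition up_col (b i : nat) := if odd i then b.*2.+2 else b.*2.+3.

Lemma up_colE b i : up_col b i = down_col b i.+1.
Proof. by rewrite /up_col /down_col /=; case: (odd i). Qed.

Lemma up_colS b i : up_col b i.+1 = down_col b i.
Proof. by rewrite /up_col /down_col /=; case: (odd i). Qed.

Lemma down_col_cases b i :
  down_col b i = b.*2.+2 /\ ~~ odd i \/ down_col b i = b.*2.+3 /\ odd i.
Proof. by rewrite /down_col; case: (odd i); auto. Qed.

Lemma up_col_cases b i :
  up_col b i = b.*2.+3 /\ ~~ odd i \/ up_col b i = b.*2.+2 /\ odd i.
Proof. by rewrite /up_col; case: (odd i); auto. Qed.

Section WallPaths.
Variables (h r : nat) (x0 : wvert h r).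
Local Notation wv := (wv x0).
Local Notation wall_path := (path (@wall_adj h r)).

Lemma wall_peg_left i : 0 < i -> i.+1 < h -> 0 < r -> wall_peg (wv i 0).
Proof.
move=> i_gt0 ih r_gt0.
have w0 : in_wall (wv i 0) by apply: in_wall_interior; lia.
have w1 : in_wall (wv i 1) by apply: in_wall_interior; lia.
apply: wall_peg_wv; rewrite ?eqxx ?orbT //; try lia.
have [odd_i|even_i] := boolP (odd i).
  have w2 : in_wall (wv i.-1 0) by apply: (@in_wall_wv_of_nbrs _ _ x0 i.-1 0 i.-1 1 i 0); wall_lia.
  by apply: (@wall_deg_wv _ _ x0 i 0 i 1 i.-1 0) => //; wall_lia.
have w2 : in_wall (wv i.+1 0) by apply: (@in_wall_wv_of_nbrs _ _ x0 i.+1 0 i.+1 1 i 0); wall_lia.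
by apply: (@wall_deg_wv _ _ x0 i 0 i 1 i.+1 0) => //; wall_lia.
Qed.

Lemma wall_peg_right i : 0 < i -> i.+1 < h -> 0 < r -> wall_peg (wv i (r.*2).-1).
Proof.
move=> i_gt0 ih r_gt0.
have w0 : in_wall (wv i (r.*2).-1) by apply: in_wall_interior; lia.
have w1 : in_wall (wv i (r.*2).-2) by apply: in_wall_interior; lia.
apply: wall_peg_wv; rewrite ?eqxx ?orbT //; try lia.
have [odd_i|even_i] := boolP (odd i).
  have w2 : in_wall (wv i.+1 (r.*2).-1).
    by apply: (@in_wall_wv_of_nbrs _ _ x0 _ _ i.+1 (r.*2).-2 i (r.*2).-1); wall_lia.
  by apply: (@wall_deg_wv _ _ x0 _ _ i (r.*2).-2 i.+1 (r.*2).-1) => //; wall_lia.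
have w2 : in_wall (wv i.-1 (r.*2).-1).
  by apply: (@in_wall_wv_of_nbrs _ _ x0 _ _ i.-1 (r.*2).-2 i (r.*2).-1); wall_lia.
by apply: (@wall_deg_wv _ _ x0 _ _ i (r.*2).-2 i.-1 (r.*2).-1) => //; wall_lia.
Qed.

Lemma wall_peg_top b : 0 < h -> b.+3 <= r -> wall_peg (wv 0 (up_col b 0)).
Proof.
move=> h_gt0 br; rewrite /up_col /=.
have w0 : in_wall (wv 0 b.*2.+3) by apply: in_wall_interior; lia.
have w1 : in_wall (wv 0 b.*2.+2) by apply: in_wall_interior; lia.
have w2 : in_wall (wv 0 b.*2.+4) by apply: in_wall_interior; lia.
apply: wall_peg_wv; rewrite ?eqxx //; try lia.
by apply: (@wall_deg_wv _ _ x0 _ _ 0 b.*2.+2 0 b.*2.+4) => //; wall_lia.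
Qed.

Lemma wall_peg_bottom b : 1 < h -> b.+3 <= r -> wall_peg (wv h.-1 (down_col b h.-1)).
Proof.
move=> h_gt1 br; have [[-> even_h]|[-> odd_h]] := down_col_cases b h.-1.
  have w0 : in_wall (wv h.-1 b.*2.+2) by apply: in_wall_interior; lia.
  have w1 : in_wall (wv h.-1 b.*2.+1) by apply: in_wall_interior; lia.
  have w2 : in_wall (wv h.-1 b.*2.+3) by apply: in_wall_interior; lia.
  apply: wall_peg_wv; rewrite ?eqxx ?orbT //; try lia.
  by apply: (@wall_deg_wv _ _ x0 _ _ h.-1 b.*2.+1 h.-1 b.*2.+3) => //; wall_lia.
have w0 : in_wall (wv h.-1 b.*2.+3) by apply: in_wall_interior; lia.
have w1 : in_wall (wv h.-1 b.*2.+2) by apply: in_wall_interior; lia.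
have w2 : in_wall (wv h.-1 b.*2.+4) by apply: in_wall_interior; lia.
apply: wall_peg_wv; rewrite ?eqxx ?orbT //; try lia.
by apply: (@wall_deg_wv _ _ x0 _ _ h.-1 b.*2.+2 h.-1 b.*2.+4) => //; wall_lia.
Qed.

Fixpoint row_left i c : seq (wvert h r) :=
  if c is c'.+1 then wv i c' :: row_left i c' else [::].

Fixpoint row_right i c m : seq (wvert h r) :=
  if m is m'.+1 then wv i c.+1 :: row_right i c.+1 m' else [::].

(* Staircases inside columns 2b+2, 2b+3: from row i up to row 0, and from row i down m rows. *)
Fixpoint stair_up b i : seq (wvert h r) :=
  if i is i'.+1 then wv i' (down_col b i') :: wv i' (up_col b i') :: stair_up b i' else [::].

Fixpoint stair_down b i m : seq (wvert h r) :=
  if m is m'.+1 then wv i.+1 (down_col b i) :: wv i.+1 (up_col b i) :: stair_down b i.+1 m'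
  else [::].

Definition coords_in (xs : seq (wvert h r)) (Q : nat -> nat -> Prop) :=
  forall z, z \in xs -> exists i j, [/\ i < h, j < r.*2, Q i j & z = wv i j].

Lemma row_left_path i c : 0 < i -> i.+1 < h -> c < r.*2 -> wall_path (wv i c) (row_left i c).
Proof.
move=> i_gt0 ih; elim: c => [|c IHc] cr //=; rewrite IHc ?andbT; last lia.
by apply: wall_adj_wv; try wall_lia; apply: in_wall_interior; lia.
Qed.

Lemma last_row_left i c : 0 < c -> last (wv i c) (row_left i c) = wv i 0.
Proof. by elim: c => [|[|c] IHc] //= _; rewrite IHc. Qed.

Lemma row_left_coords i c : i < h -> c <= r.*2 ->
  coords_in (row_left i c) (fun i' j => i' = i /\ j < c).
Proof.
move=> ih; elim: c => [|c IHc] cr z //=; rewrite inE => /predU1P[->|/IHc[|i' [j [? ? [-> jc] ->]]]].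
- by exists i, c; split => //; lia.
- lia.
- by exists i, j; split => //; lia.
Qed.

Lemma row_right_path i c m : 0 < i -> i.+1 < h -> c + m < r.*2 ->
  wall_path (wv i c) (row_right i c m).
Proof.
move=> i_gt0 ih; elim: m c => [|m IHm] c cmr //=; rewrite IHm ?andbT; last lia.
by apply: wall_adj_wv; try wall_lia; apply: in_wall_interior; lia.
Qed.

Lemma last_row_right i c m : last (wv i c) (row_right i c m) = wv i (c + m).
Proof. by elim: m c => [|m IHm] c /=; rewrite ?addn0 // IHm addSnnS. Qed.

Lemma row_right_coords i c m : i < h -> c + m < r.*2 ->
  coords_in (row_right i c m) (fun i' j => i' = i /\ c < j).
Proof.
move=> ih; elim: m c => [|m IHm] c cmr z //=.
rewrite inE => /predU1P[->|/IHm[|i' [j [? ? [-> cj] ->]]]].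
- by exists i, c.+1; split => //; lia.
- lia.
- by exists i, j; split => //; lia.
Qed.

Lemma stair_up_path b i : b.+3 <= r -> i < h -> wall_path (wv i (up_col b i)) (stair_up b i).
Proof.
move=> br; elim: i => [|i IHi] ih //=; rewrite IHi ?andbT ?up_colS; last lia.
have [[-> ?]|[-> ?]] := down_col_cases b i; have [[-> ?]|[-> ?]] := up_col_cases b i;
  by rewrite !wall_adj_wv //; try wall_lia; apply: in_wall_interior; lia.
Qed.

Lemma last_stair_up b i : 0 < i -> last (wv i (up_col b i)) (stair_up b i) = wv 0 (up_col b 0).
Proof. by elim: i => [|[|i] IHi] //= _; rewrite IHi. Qed.

Lemma stair_up_coords b i : i <= h -> b.+3 <= r ->
  coords_in (stair_up b i) (fun i' j => i' < i /\ (j = b.*2.+2 \/ j = b.*2.+3)).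
Proof.
move=> + br; elim: i => [|i IHi] ih z //=.
rewrite !inE => /predU1P[->|/predU1P[->|/IHi[|i' [j [? ? [i'i jb] ->]]]]].
- exists i, (down_col b i); split => //; have := down_col_cases b i; lia.
- exists i, (up_col b i); split => //; have := up_col_cases b i; lia.
- lia.
- by exists i', j; split => //; lia.
Qed.

Lemma stair_down_path b i m : b.+3 <= r -> i + m < h ->
  wall_path (wv i (down_col b i)) (stair_down b i m).
Proof.
move=> br; elim: m i => [|m IHm] i imh //=; rewrite up_colE IHm ?andbT -?up_colE; last lia.
have [[-> ?]|[-> ?]] := down_col_cases b i; have [[-> ?]|[-> ?]] := up_col_cases b i;
  by rewrite !wall_adj_wv //; try wall_lia; apply: in_wall_interior; lia.
Qed.

Lemma last_stair_down b i m :
  last (wv i (down_col b i)) (stair_down b i m.+1) = wv (i + m.+1) (down_col b (i + m.+1)).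
Proof.
elim: m i => [|m IHm] i; first by rewrite /= up_colE addn1.
transitivity (last (wv i.+1 (down_col b i.+1)) (stair_down b i.+1 m.+1)).
  by rewrite /= up_colE.
by rewrite IHm addSnnS.
Qed.

Lemma stair_down_coords b i m : i + m < h -> b.+3 <= r ->
  coords_in (stair_down b i m) (fun i' j => i < i' /\ (j = b.*2.+2 \/ j = b.*2.+3)).
Proof.
move=> + br; elim: m i => [|m IHm] i imh z //=.
rewrite !inE => /predU1P[->|/predU1P[->|/IHm[|i' [j [? ? [ii' jb] ->]]]]].
- exists i.+1, (down_col b i); split => //; try lia; have := down_col_cases b i; lia.
- exists i.+1, (up_col b i); split => //; try lia; have := up_col_cases b i; lia.
- lia.
- by exists i', j; split => //; lia.
Qed.

End WallPaths.

Lemma eq_set2 (T : finType) (a b c d : T) :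
  [set a; b] = [set c; d] -> a = c /\ b = d \/ a = d /\ b = c.
Proof.
move=> e; have : a \in [set c; d] by rewrite -e set21.
have : b \in [set c; d] by rewrite -e set22.
have : c \in [set a; b] by rewrite e set21.
have : d \in [set a; b] by rewrite e set22.
by move=> /set2P[] e1 /set2P[] e2 /set2P[] e3 /set2P[] e4; subst; auto.
Qed.

Lemma wall_adj_in_wall h r (x y : wvert h r) : wall_adj x y -> in_wall x /\ in_wall y.
Proof. by case/and3P. Qed.

Lemma wall_path_in_wall h r (x : wvert h r) xs z :
  path (@wall_adj h r) x xs -> z \in xs -> in_wall z.
Proof.
elim: xs x => [|y xs IHxs] x //= /andP[/wall_adj_in_wall[_ wy] yxs].
by rewrite inE => /predU1P[->|/(IHxs _ yxs)].
Qed.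

Section WallImage.
Variables (V : finType) (G : sgraph V) (h r : nat).
Variables (phi : wvert h r -> V) (P : wvert h r -> wvert h r -> seq V).
Hypothesis modelG : wall_model G phi P.
Local Notation wall_path := (path (@wall_adj h r)).

Fixpoint wall_path_image (x : wvert h r) (xs : seq (wvert h r)) : seq V :=
  if xs is y :: ys then rcons (P x y) (phi y) ++ wall_path_image y ys else [::].

Lemma path_wall_path_image x xs : wall_path x xs -> path (adj G) (phi x) (wall_path_image x xs).
Proof.
case: modelG => _ _ modelP _ _; elim: xs x => [|y xs IHxs] x //= /andP[xy yxs].
by rewrite cat_path last_rcons IHxs // andbT; case: (modelP _ _ xy).
Qed.

Lemma last_wall_path_image x xs : last (phi x) (wall_path_image x xs) = phi (last x xs).
Proof. by elim: xs x => [|y xs IHxs] x //=; rewrite last_cat last_rcons IHxs. Qed.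

Lemma mem_wall_path_image x xs v : wall_path x xs -> v \in wall_path_image x xs ->
  (exists2 z, z \in xs & v = phi z) \/
  (exists y z, [/\ wall_adj y z, y \in x :: xs, z \in xs & v \in P y z]).
Proof.
elim: xs x => [|y xs IHxs] x //= /andP[xy yxs].
rewrite mem_cat mem_rcons inE -orbA => /or3P[/eqP->|vP|/(IHxs _ yxs)].
- by left; exists y; rewrite ?mem_head.
- by right; exists x, y; rewrite !mem_head.
case=> [[z zxs ->]|[y' [z [y'z y'xs zxs vP]]]].
  by left; exists z => //; rewrite in_cons zxs orbT.
by right; exists y', z; split; rewrite // in_cons ?y'xs ?zxs orbT.
Qed.

Lemma wall_path_images_disjoint s1 xs1 s2 xs2 :
  wall_path s1 xs1 -> wall_path s2 xs2 ->
  [disjoint xs1 & xs2] -> s1 \notin xs2 -> s2 \notin xs1 ->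
  [disjoint wall_path_image s1 xs1 & wall_path_image s2 xs2].
Proof.
case: modelG => phi_inj _ _ P_disjoint phi_notin_P p1 p2 dxs s1xs2 s2xs1.
have notin_xs2 z : z \in xs1 -> z \in xs2 = false by apply: disjointFr.
rewrite disjoint_has; apply/hasPn => v v1; apply/negP => v2.
have [[z1 z1xs eq1]|[y1 [z1 [a1 y1xs z1xs v1P]]]] := mem_wall_path_image p1 v1;
  have [[z2 z2xs eq2]|[y2 [z2 [a2 y2xs z2xs v2P]]]] := mem_wall_path_image p2 v2.
- have eqz : z1 = z2.
    apply: phi_inj (wall_path_in_wall p1 z1xs) (wall_path_in_wall p2 z2xs) _.
    by rewrite -eq1 -eq2.
  by rewrite -eqz notin_xs2 in z2xs.
- by rewrite eq1 (negbTE (phi_notin_P _ _ _ a2 (wall_path_in_wall p1 z1xs))) in v2P.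
- by rewrite eq2 (negbTE (phi_notin_P _ _ _ a1 (wall_path_in_wall p2 z2xs))) in v1P.
have [/eq_set2[[_ eqz]|[_ eqzy]]|neq] := eqVneq [set y1; z1] [set y2; z2].
- by rewrite -eqz notin_xs2 in z2xs.
- move: y2xs; rewrite inE -eqzy => /predU1P[eqs2|].
    by rewrite -eqs2 z1xs in s2xs1.
  by rewrite (notin_xs2 _ z1xs).
by have /hasP := P_disjoint _ _ _ _ a1 a2 neq; apply; exists v.
Qed.

Lemma wall_edge_inG x y : wf_graph G -> wall_adj x y -> {subset P x y <= gV G}.
Proof.
case: modelG => _ _ modelP _ _ wfG xy v vP; have [pxy _ _] := modelP _ _ xy.
by apply: path_adj_inG wfG pxy _; rewrite mem_rcons inE vP orbT.
Qed.

Lemma wall_edge_last_adj x y : wall_adj x y -> adj G (last (phi x) (P x y)) (phi y).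
Proof.
case: modelG => _ _ modelP _ _ xy; have [pxy _ _] := modelP _ _ xy.
by move: pxy; rewrite rcons_path => /andP[].
Qed.

Definition wall_branch_set (zs : seq (wvert h r)) (es : seq (wvert h r * wvert h r)) : {set V} :=
  [set v | has (fun z => v == phi z) zs || has (fun e => v \in P e.1 e.2) es].

Lemma wall_branch_sets_disjoint (zs1 zs2 : seq (wvert h r)) es1 es2 :
  all (@in_wall h r) zs1 -> all (@in_wall h r) zs2 ->
  all (fun e => wall_adj e.1 e.2) es1 -> all (fun e => wall_adj e.1 e.2) es2 ->
  [disjoint zs1 & zs2] ->
  (forall e1 e2, e1 \in es1 -> e2 \in es2 -> [set e1.1; e1.2] != [set e2.1; e2.2]) ->
  [disjoint wall_branch_set zs1 es1 & wall_branch_set zs2 es2].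
Proof.
move=> /allP zs1w /allP zs2w /allP es1a /allP es2a dzs des.
case: modelG => phi_inj _ _ P_disjoint phi_notin_P.
rewrite -setI_eq0; apply/eqP/setP => v; rewrite !inE; apply/negP.
case/andP=> /orP[/hasP[z1 z1zs /eqP ->]|/hasP[e1 e1es v1]]
            /orP[/hasP[z2 z2zs /eqP eqz]|/hasP[e2 e2es v2]].
- have {}eqz := phi_inj _ _ (zs1w _ z1zs) (zs2w _ z2zs) eqz.
  by rewrite -eqz (disjointFr dzs z1zs) in z2zs.
- by rewrite (negbTE (phi_notin_P _ _ _ (es2a _ e2es) (zs1w _ z1zs))) in v2.
- by rewrite eqz (negbTE (phi_notin_P _ _ _ (es1a _ e1es) (zs2w _ z2zs))) in v1.
have /hasP := P_disjoint _ _ _ _ (es1a _ e1es) (es2a _ e2es) (des _ _ e1es e2es).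
by apply; exists v.
Qed.

End WallImage.

Section Bricks.
Variables (V : finType) (G : sgraph V) (h r : nat) (x0 : wvert h r).
Variables (phi : wvert h r -> V) (P : wvert h r -> wvert h r -> seq V).
Hypothesis modelG : wall_model G phi P.
Local Notation wv := (wv x0).

Definition brick_set a b : {set V} :=
  wall_branch_set phi P [:: wv a.+1 b.*2.+2; wv a.+1 b.*2.+3]
    [:: (wv a.+1 b.*2.+2, wv a.+1 b.*2.+3); (wv a.+1 b.*2.+3, wv a.+1 b.*2.+4);
        (wv a.+1 (down_col b a.+1), wv a.+2 (down_col b a.+1))].

Lemma mem_brick_set a b v : v \in brick_set a b =
  [|| v == phi (wv a.+1 b.*2.+2), v == phi (wv a.+1 b.*2.+3),
      v \in P (wv a.+1 b.*2.+2) (wv a.+1 b.*2.+3), v \in P (wv a.+1 b.*2.+3) (wv a.+1 b.*2.+4)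
    | v \in P (wv a.+1 (down_col b a.+1)) (wv a.+2 (down_col b a.+1))].
Proof. by rewrite inE /= !orbF !orbA. Qed.

Lemma phi_down_col_brick_set a b : phi (wv a.+1 (down_col b a.+1)) \in brick_set a b.
Proof.
by rewrite mem_brick_set; have [[-> _]|[-> _]] := down_col_cases b a.+1; rewrite eqxx ?orbT.
Qed.

Lemma phi_up_col_brick_set a b : phi (wv a.+1 (up_col b a.+1)) \in brick_set a b.
Proof.
by rewrite mem_brick_set; have [[-> _]|[-> _]] := up_col_cases b a.+1; rewrite eqxx ?orbT.
Qed.

Section OneBrick.
Variables a b : nat.
Hypotheses (ah : a.+3 <= h) (br : b.+3 <= r).

Lemma brick_in_wall : in_wall (wv a.+1 b.*2.+2) /\ in_wall (wv a.+1 b.*2.+3).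
Proof. by split; apply: in_wall_interior; lia. Qed.

Lemma brick_edges_adj :
  [/\ wall_adj (wv a.+1 b.*2.+2) (wv a.+1 b.*2.+3), wall_adj (wv a.+1 b.*2.+3) (wv a.+1 b.*2.+4)
    & wall_adj (wv a.+1 (down_col b a.+1)) (wv a.+2 (down_col b a.+1))].
Proof.
have [[-> ?]|[-> ?]] := down_col_cases b a.+1;
  by split; apply: wall_adj_wv; try wall_lia; apply: in_wall_interior; lia.
Qed.

Lemma brick_set_sub : wf_graph G -> brick_set a b \subset gV G.
Proof.
case: modelG => _ phiG _ _ _ wfG; have [w2 w3] := brick_in_wall.
have [e23 e34 edown] := brick_edges_adj.
apply/subsetP => v; rewrite mem_brick_set => /or4P[/eqP->|/eqP->|vP|/orP[vP|vP]]; rewrite ?phiG //.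
- exact: (wall_edge_inG modelG wfG e23 vP).
- exact: (wall_edge_inG modelG wfG e34 vP).
- exact: (wall_edge_inG modelG wfG edown vP).
Qed.

Lemma brick_set_connected : connected_in G (brick_set a b).
Proof.
case: modelG => _ _ modelP _ _; have [e23 e34 edown] := brick_edges_adj.
have [p23 _ _] := modelP _ _ e23; have [p34 _ _] := modelP _ _ e34.
have [pdown _ _] := modelP _ _ edown.
set x2 := wv a.+1 b.*2.+2; set x3 := wv a.+1 b.*2.+3.
have x2B : phi x2 \in brick_set a b by rewrite mem_brick_set eqxx.
have sub23 : {subset rcons (P x2 x3) (phi x3) <= brick_set a b}.
  by move=> v; rewrite mem_rcons inE mem_brick_set => /orP[->|->]; rewrite ?orbT.
have reach3 : reachable_in G (brick_set a b) (phi x2) (phi x3).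
  by apply: reachable_in_path p23 sub23 _; rewrite mem_rcons mem_head.
apply: (connected_in_of_root x2B) => v.
rewrite mem_brick_set => /or4P[/eqP->|/eqP->|vP|/orP[vP|vP]].
- exact: reachable_in_refl.
- exact: reach3.
- by apply: reachable_in_path p23 sub23 _; rewrite mem_rcons inE vP orbT.
- apply: reachable_in_trans reach3 _; move: p34; rewrite rcons_path => /andP[p34 _].
  by apply: reachable_in_path p34 _ vP => u uP; rewrite mem_brick_set uP !orbT.
have reach_down : reachable_in G (brick_set a b) (phi x2) (phi (wv a.+1 (down_col b a.+1))).
  by have [[-> _]|[-> _]] := down_col_cases b a.+1; [apply: reachable_in_refl | apply: reach3].
apply: reachable_in_trans reach_down _; move: pdown; rewrite rcons_path => /andP[pdown _].
by apply: reachable_in_path pdown _ vP => u uP; rewrite mem_brick_set uP !orbT.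
Qed.

End OneBrick.

Lemma brick_sets_disjoint a b a' b' : a.+3 <= h -> b.+3 <= r -> a'.+3 <= h -> b'.+3 <= r ->
  (a != a') || (b != b') -> [disjoint brick_set a b & brick_set a' b'].
Proof.
move=> ah br a'h b'r neq; apply: (wall_branch_sets_disjoint modelG) => /=.
- by have [-> ->] := brick_in_wall ah br.
- by have [-> ->] := brick_in_wall a'h b'r.
- by have [-> -> ->] := brick_edges_adj ah br.
- by have [-> -> ->] := brick_edges_adj a'h b'r.
- by rewrite disjoint_has /= !inE !eq_wv; lia.
have [[-> ?]|[-> ?]] := down_col_cases b a.+1; have [[-> ?]|[-> ?]] := down_col_cases b' a'.+1;
  move=> e e'; rewrite !inE => /or3P[]/eqP-> /or3P[]/eqP-> /=;
  by apply/eqP => /eq_set2[][/eqP + /eqP]; rewrite !eq_wv; lia.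
Qed.

Lemma brick_set_adj_right a b : a.+3 <= h -> b.+4 <= r ->
  exists u v, [/\ u \in brick_set a b, v \in brick_set a b.+1 & adj G u v].
Proof.
move=> ah br; have [_ e34 _] := brick_edges_adj ah (ltnW br).
set x3 := wv a.+1 b.*2.+3; set x4 := wv a.+1 b.*2.+4.
exists (last (phi x3) (P x3 x4)), (phi x4); split; last exact: (wall_edge_last_adj modelG e34).
  by have := mem_last (phi x3) (P x3 x4); rewrite inE mem_brick_set => /orP[]->; rewrite ?orbT.
by rewrite mem_brick_set doubleS eqxx.
Qed.

Lemma brick_set_adj_down a b : a.+4 <= h -> b.+3 <= r ->
  exists u v, [/\ u \in brick_set a b, v \in brick_set a.+1 b & adj G u v].
Proof.
move=> ah br; have [_ _ edown] := brick_edges_adj (ltnW ah) br.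
set xa := wv a.+1 (down_col b a.+1); set xb := wv a.+2 (down_col b a.+1).
exists (last (phi xa) (P xa xb)), (phi xb); split; last exact: (wall_edge_last_adj modelG edown).
  have := mem_last (phi xa) (P xa xb); rewrite inE => /orP[/eqP->|xP].
    exact: phi_down_col_brick_set.
  by rewrite mem_brick_set xP !orbT.
by rewrite /xb -up_colS phi_up_col_brick_set.
Qed.

Lemma wall_path_images_disjoint_coords i1 j1 xs1 Q1 i2 j2 xs2 Q2 :
  i1 < h -> j1 < r.*2 -> i2 < h -> j2 < r.*2 ->
  path (@wall_adj h r) (wv i1 j1) xs1 -> path (@wall_adj h r) (wv i2 j2) xs2 ->
  coords_in x0 xs1 Q1 -> coords_in x0 xs2 Q2 ->
  (forall i j, Q1 i j -> Q2 i j -> False) -> ~ Q2 i1 j1 -> ~ Q1 i2 j2 ->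
  [disjoint wall_path_image phi P (wv i1 j1) xs1 & wall_path_image phi P (wv i2 j2) xs2].
Proof.
move=> i1h j1r i2h j2r p1 p2 c1 c2 disjQ nQ2 nQ1; apply: (wall_path_images_disjoint modelG p1 p2).
- rewrite disjoint_has; apply/hasPn => _ /c1[i [j [ih jr q1 ->]]]; apply/negP.
  case/c2 => i' [j' [i'h j'r q2 /eqP]]; rewrite eq_wv // => /andP[/eqP ei /eqP ej].
  by subst; exact: disjQ q1 q2.
- apply/negP => /c2[i [j [ih jr q2 /eqP]]]; rewrite eq_wv // => /andP[/eqP ei /eqP ej].
  by subst.
- apply/negP => /c1[i [j [ih jr q1 /eqP]]]; rewrite eq_wv // => /andP[/eqP ei /eqP ej].
  by subst.
Qed.

Section Exits.
Variables a b : nat.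
Hypotheses (ah : a.+3 <= h) (br : b.+3 <= r).

(* Four routes from the branch set of (a, b) to pegs: left and right along row a+1, and up and
   down the staircase of brick column b. *)
Definition exit_col (j : 'I_4) :=
  nth 0 [:: b.*2.+2; b.*2.+3; up_col b a.+1; down_col b a.+1] j.

Definition exit_route (j : 'I_4) :=
  nth [::] [:: row_left x0 a.+1 b.*2.+2; row_right x0 a.+1 b.*2.+3 (r.*2 - b.*2 - 4);
               stair_up x0 b a.+1; stair_down x0 b a.+1 (h - a - 3).+1] j.

Definition exit_region (j : 'I_4) : nat -> nat -> Prop :=
  nth (fun _ _ => False)
    [:: fun i c => i = a.+1 /\ c < b.*2.+2; fun i c => i = a.+1 /\ b.*2.+3 < c;
        fun i c => i < a.+1 /\ (c = b.*2.+2 \/ c = b.*2.+3);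
        fun i c => a.+1 < i /\ (c = b.*2.+2 \/ c = b.*2.+3)] j.

Lemma exit_col_mid j : exit_col j = b.*2.+2 \/ exit_col j = b.*2.+3.
Proof.
rewrite /exit_col; case: j => [[|[|[|[|//]]]] ?] /=; auto.
  by have := up_col_cases b a.+1; tauto.
by have := down_col_cases b a.+1; tauto.
Qed.

Lemma exit_route_path j : path (@wall_adj h r) (wv a.+1 (exit_col j)) (exit_route j).
Proof.
rewrite /exit_col /exit_route; case: j => [[|[|[|[|//]]]] ?]; cbn [nth nat_of_ord].
- by apply: row_left_path; lia.
- by apply: row_right_path; lia.
- by apply: stair_up_path; lia.
- by apply: stair_down_path; lia.
Qed.

Lemma exit_route_coords j : coords_in x0 (exit_route j) (exit_region j).
Proof.
rewrite /exit_route /exit_region; case: j => [[|[|[|[|//]]]] ?]; cbn [nth nat_of_ord].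
- by apply: (@row_left_coords _ _ x0 a.+1 b.*2.+2); lia.
- by apply: (@row_right_coords _ _ x0 a.+1 b.*2.+3); lia.
- by apply: (@stair_up_coords _ _ x0 b a.+1); lia.
- by apply: (@stair_down_coords _ _ x0 b a.+1); lia.
Qed.

Lemma exit_route_peg j : wall_peg (last (wv a.+1 (exit_col j)) (exit_route j)).
Proof.
rewrite /exit_col /exit_route; case: j => [[|[|[|[|//]]]] ?]; cbn [nth nat_of_ord].
- by rewrite last_row_left //; apply: wall_peg_left; lia.
- rewrite last_row_right; have -> : b.*2.+3 + (r.*2 - b.*2 - 4) = (r.*2).-1 by lia.
  by apply: wall_peg_right; lia.
- by rewrite last_stair_up //; apply: wall_peg_top; lia.
- rewrite last_stair_down; have -> : a.+1 + (h - a - 3).+1 = h.-1 by lia.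
  by apply: wall_peg_bottom; lia.
Qed.

Lemma exit_regions_disjoint j j' :
  j != j' -> forall i c, exit_region j i c -> exit_region j' i c -> False.
Proof.
by rewrite /exit_region; case: j j' => [[|[|[|[|//]]]] ?] [[|[|[|[|//]]]] ?] //= _ i c; lia.
Qed.

Lemma exit_col_notin_region j j' : ~ exit_region j' a.+1 (exit_col j).
Proof.
by move: (exit_col_mid j); rewrite /exit_region; case: j' => [[|[|[|[|//]]]] ?] /=; lia.
Qed.

Lemma brick_set_exits :
  exists (s : 'I_4 -> V) (p : 'I_4 -> seq V),
  [/\ forall j, s j \in brick_set a b, forall j, path (adj G) (s j) (p j),
      forall j, exists2 x, wall_peg x & last (s j) (p j) = phi x
    & forall j j', j != j' -> [disjoint p j & p j']].
Proof.
have col_lt j : exit_col j < r.*2 by case: (exit_col_mid j) => ->; lia.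
exists (fun j => phi (wv a.+1 (exit_col j))).
exists (fun j => wall_path_image phi P (wv a.+1 (exit_col j)) (exit_route j)).
split=> [j|j|j|j j' neq].
- by case: (exit_col_mid j) => ->; rewrite mem_brick_set eqxx ?orbT.
- exact: (path_wall_path_image modelG (exit_route_path j)).
- exists (last (wv a.+1 (exit_col j)) (exit_route j)); first exact: exit_route_peg.
  exact: last_wall_path_image.
have a1h : a.+1 < h by lia.
cbv beta; apply: (wall_path_images_disjoint_coords a1h (col_lt j) a1h (col_lt j')
  (exit_route_path j) (exit_route_path j') (@exit_route_coords j) (@exit_route_coords j')).
- exact: exit_regions_disjoint.
- exact: exit_col_notin_region.
- exact: exit_col_notin_region.
Qed.

End Exits.

End Bricks.

Lemma brick_set_meets_V0 (V : finType) (G Gt : sgraph V) k Gs h r (x0 : wvert h r) phi P a b :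
  flat_decomposition G Gt k Gs -> wf_graph G -> wall_model G phi P ->
  (forall x, wall_peg x -> phi x \in gV (Gs 0)) -> a.+3 <= h -> b.+3 <= r ->
  brick_set x0 phi P a b :&: gV (Gs 0) != set0.
Proof.
move=> flatG wfG modelG pegsV0 ah br.
have [s [p [sB sp sV0 disj_p]]] := brick_set_exits x0 modelG ah br.
apply: (flat_meets_V0_of_exits flatG (brick_set_connected modelG ah br)
  (brick_set_sub x0 modelG ah br wfG) sB sp _ disj_p).
by move=> j; have [x /pegsV0 + ->] := sV0 j.
Qed.

Lemma brick_sets_adj_of_grid_adj (V : finType) (G : sgraph V) h r (x0 : wvert h r) phi P n
    (x y : 'I_n * 'I_n) :
  wall_model G phi P -> n.+2 <= h -> n.+2 <= r -> grid_adj x y ->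
  exists u v, [/\ u \in brick_set x0 phi P x.1 x.2, v \in brick_set x0 phi P y.1 y.2 & adj G u v].
Proof.
move=> modelG nh nr; have bound (i : 'I_n) m : n.+2 <= m -> i.+3 <= m by case: i => /= i; lia.
have swap X Y : (exists u v, [/\ u \in Y, v \in X & adj G u v]) ->
    exists u v, [/\ u \in X, v \in Y & adj G u v].
  by case=> u [v [uY vX uv]]; exists v, u; rewrite adjC.
case: x y => [a b] [a' b']; rewrite /grid_adj /=.
case/orP => [/andP[/eqP <- /orP[] /eqP eb] | /andP[/eqP <- /orP[] /eqP ea]].
- rewrite -eb; apply: (brick_set_adj_right x0 modelG (bound _ _ nh)).
  by rewrite eb bound.
- apply/swap; rewrite -eb; apply: (brick_set_adj_right x0 modelG (bound _ _ nh)).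
  by rewrite eb bound.
- rewrite -ea; apply: (brick_set_adj_down x0 modelG _ (bound _ _ nr)).
  by rewrite ea bound.
- apply/swap; rewrite -ea; apply: (brick_set_adj_down x0 modelG _ (bound _ _ nr)).
  by rewrite ea bound.
Qed.

Theorem lemma3p12 (V : finType) (R : realType) (G C : sgraph V) (w : nat)
    (phi : wvert w w -> V) (P : wvert w w -> wvert w w -> seq V)
    (k : nat) (Gs : nat -> sgraph V) (Gt : sgraph V)
    (pos : V -> (R * R)%type) (arc : {set V} -> R -> (R * R)%type) :
  wf_graph G ->
  wall_model G phi P ->
  is_cycle C -> subgraph C G ->
  (forall x, wall_peg x -> phi x \in gV C) ->
  C_flat_witness G C k Gs Gt pos arc ->
  has_grid_minor Gt (w - 2).
Proof.
move=> wfG modelG _ _ pegsC flatW; have flatG := C_flat_witness_flat flatW.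
have [_ _ [[subCV _] [_ [VGt _]]] _ _] := flatW.
have pegsV0 x : wall_peg x -> phi x \in gV (Gs 0) by move/pegsC/(subsetP subCV).
have [w_le2|w_gt2] := leqP w 2.
  have no_vertex : 'I_(w - 2) -> False by case=> i; move: w_le2; clear; lia.
  by exists (fun _ => set0); split=> x; case: (no_vertex x.1).
have w_gt0 : 0 < w by lia.
have w2_gt0 : 0 < w.*2 by rewrite double_gt0.
pose x0 : wvert w w := (Ordinal w_gt0, Ordinal w2_gt0).
have bound (i : 'I_(w - 2)) : i.+3 <= w by case: i => /= i; move: w_gt2; clear; lia.
pose B (x : 'I_(w - 2) * 'I_(w - 2)) := brick_set x0 phi P x.1 x.2.
have B_conn x : connected_in G (B x) by exact: (brick_set_connected modelG (bound _) (bound _)).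
have B_meets x : B x :&: gV (Gs 0) != set0.
  exact: (brick_set_meets_V0 x0 flatG wfG modelG pegsV0 (bound _) (bound _)).
have B_disj x y : x != y -> [disjoint B x & B y].
  case: x y => [a b] [a' b'] neq.
  apply: (brick_sets_disjoint x0 modelG (bound a) (bound b) (bound a') (bound b')).
  by move: neq; rewrite xpair_eqE negb_and.
exists (fun x => B x :&: gV (Gs 0)); split=> [x|x|x|x y neq|x y xy].
- exact: B_meets.
- by rewrite VGt subsetIr.
- exact: flat_connected_in flatG wfG _ (B_conn x).
- exact: disjointW (subsetIl _ _) (subsetIl _ _) (B_disj x y neq).
have nw : (w - 2).+2 <= w by lia.
have [u [v [uB vB uv]]] := brick_sets_adj_of_grid_adj x0 modelG nw nw xy.
have neq : x != y by apply: contraTneq xy => ->; rewrite /grid_adj; lia.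
exact: (flat_adj_transfer flatG wfG (B_disj x y neq) (B_conn x) (B_conn y) (B_meets x) (B_meets y)
  uB vB uv).
Qed.
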